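(* Let $G$ be an irreducible complex algebraic group, $D$ a Zariski dense subgroup of $G$, and $A$ a finitely generated free abelian group. Assume $D$ acts on $A$ via a homomorphism $D\to\mathrm{GL}(A)$ such that this action extends to a rational representation of $G$ on $A\otimes\mathbb{C}$. Let $\mathfrak{X}\subset A\setminus\{0\}$ be the set of all elements $a$ not contained in any proper $G$-invariant subspace of $A\otimes\mathbb{C}$. Then the action of $D$ on $A$ possesses the subgroup displacement property with respect to $\mathfrak{X}$.
   Context: Let $r=\mathrm{rank}(A)$. An action of $D$ on $A$ has the subgroup displacement property with respect to $\mathfrak{X}\subset A\setminus\{0\}$ if for every subgroup $B\subset A$ with $\mathrm{rank}(B)<r$ and every finite subset $X\subset\mathfrak{X}$ there is $g\in D$ such that $g(B)\cap X=\emptyset$. *)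

From HB Require Import structures.
From mathcomp Require Import all_boot all_order all_algebra.
From mathcomp Require Import reals complex.
Set Implicit Arguments. Unset Strict Implicit. Unset Printing Implicit Defensive.
Import Order.TTheory GRing.Theory Num.Theory.
Local Open Scope ring_scope.

Inductive pexpr (C : Type) (n : nat) : Type :=
| PConst of C
| PVar of 'I_n & 'I_n
| PAdd of pexpr C n & pexpr C n
| PMul of pexpr C n & pexpr C n.

Fixpoint peval (C : comRingType) (n : nat) (p : pexpr C n) (M : 'M[C]_n) : C :=
  match p with
  | PConst c => c
  | PVar i j => M i j
  | PAdd p q => peval p M + peval q M
  | PMul p q => peval p M * peval q M
  end.

Section Defs.
Variable C : fieldType.

Definition zclosed n (S : 'M[C]_n -> Prop) : Prop :=
  exists P : pexpr C n -> Prop,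
    forall M, S M <-> (M \in unitmx /\ forall p, P p -> peval p M = 0).

Definition is_group n (G : 'M[C]_n -> Prop) : Prop :=
  [/\ G 1%:M,
      (forall x, G x -> x \in unitmx),
      (forall x y, G x -> G y -> G (x *m y)) &
      (forall x, G x -> G (invmx x))].

Definition linear_algebraic_group n (G : 'M[C]_n -> Prop) : Prop :=
  is_group G /\ zclosed G.

Definition zirreducible n (G : 'M[C]_n -> Prop) : Prop :=
  (exists x, G x) /\
  forall S1 S2 : 'M[C]_n -> Prop, zclosed S1 -> zclosed S2 ->
    (forall x, G x -> S1 x \/ S2 x) ->
    (forall x, G x -> S1 x) \/ (forall x, G x -> S2 x).

Definition zdense n (D G : 'M[C]_n -> Prop) : Prop :=
  (forall x, D x -> G x) /\
  forall S, zclosed S -> (forall x, D x -> S x) -> forall x, G x -> S x.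

(* rational representation of G on C^r: a group homomorphism G -> GL_r(C)
   whose matrix coefficients are regular functions on G, i.e. restrictions
   of elements of C[x_ij, 1/det]. *)
Definition rational_rep n r (G : 'M[C]_n -> Prop) (rho : 'M[C]_n -> 'M[C]_r)
  : Prop :=
  [/\ exists (k : nat) (p : 'I_r -> 'I_r -> pexpr C n),
        forall g, G g -> rho g = \matrix_(i, j) (peval (p i j) g / (\det g) ^+ k),
      (forall g, G g -> rho g \in unitmx) &
      (forall g h, G g -> G h -> rho (g *m h) = rho g *m rho h)].
End Defs.

(* A = Z^r as integer row vectors; a matrix M acts (on the left) by a |-> M a,
   realised on row vectors as a *m M^T. *)
Definition actv r (M : 'M[int]_r) (a : 'rV[int]_r) : 'rV[int]_r := a *m M^T.

Definition toC (C : fieldType) r (a : 'rV[int]_r) : 'rV[C]_r :=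
  map_mx (fun z : int => z%:~R) a.

(* The set frak X: nonzero a in A not contained in any proper G-invariant
   C-subspace of A (x) C = C^r (subspaces = row spaces of r x r matrices). *)
Definition frakX (C : fieldType) n r (G : 'M[C]_n -> Prop)
  (rho : 'M[C]_n -> 'M[C]_r) (a : 'rV[int]_r) : Prop :=
  a != 0 /\
  forall U : 'M[C]_r,
    (forall g, G g -> (U *m (rho g)^T <= U)%MS) ->
    (\rank U < r)%N -> ~ (toC C a <= U)%MS.

Definition is_subgroupA r (B : 'rV[int]_r -> Prop) : Prop :=
  [/\ B 0, (forall x y, B x -> B y -> B (x + y)) & (forall x, B x -> B (- x))].

Definition has_indep r (B : 'rV[int]_r -> Prop) (k : nat) : Prop :=
  exists v : 'I_k -> 'rV[int]_r,
    (forall i, B (v i)) /\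
    (forall c : 'I_k -> int, \sum_(i < k) c i *: v i = 0 -> forall i, c i = 0).

Definition rank_lt r (B : 'rV[int]_r -> Prop) (m : nat) : Prop :=
  forall k, has_indep B k -> (k < m)%N.

Definition subgroup_displacement (C : fieldType) n r (D : 'M[C]_n -> Prop)
  (phi : 'M[C]_n -> 'M[int]_r) (X : 'rV[int]_r -> Prop) : Prop :=
  forall B : 'rV[int]_r -> Prop, is_subgroupA B -> rank_lt B r ->
  forall F : seq 'rV[int]_r, (forall x, x \in F -> X x) ->
  exists g, D g /\ forall b, B b -> actv (phi g) b \notin F.

From HB Require Import structures.
From mathcomp Require Import all_boot all_order all_algebra.
From mathcomp Require Import reals complex.
From mathcomp Require Import ring zify.
From Stdlib Require Import Classical.
Import Order.TTheory GRing.Theory Num.Theory.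
Local Open Scope ring_scope.
Set Implicit Arguments. Unset Strict Implicit.

(* A subgroup [B] of rank [< r] spans a proper subspace [U] of [C^r].  If no
   [g] in [D] moved [B] off the finite set [X], then [D] would be covered by the
   finitely many sets [{h | rho h x \in U}], [x \in X], which are Zariski
   closed because [rho] is rational.  By density they cover [G], and by
   irreducibility one of them is all of [G].  The span of the [G]-orbit of that
   [x] is then a proper [G]-invariant subspace containing [x], contradicting
   [x \in frakX]. *)

Section Zariski.
Variables (C : fieldType) (n : nat).
Implicit Types S : 'M[C]_n -> Prop.

Lemma zclosed_ext S S' : (forall M, S M <-> S' M) -> zclosed S -> zclosed S'.
Proof. by move=> E [P HP]; exists P => M; rewrite -E; exact: HP. Qed.

Lemma zclosed0 : zclosed (fun _ : 'M[C]_n => False).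
Proof.
exists (fun p => p = PConst n 1) => M; split => // [[_ /(_ _ erefl)]] /=.
by move/eqP; rewrite oner_eq0.
Qed.

(* The union is cut out by all products [p1 * p2] of equations of each set. *)
Lemma zclosedU S1 S2 : zclosed S1 -> zclosed S2 -> zclosed (fun M => S1 M \/ S2 M).
Proof.
move=> [P1 H1] [P2 H2].
exists (fun p => exists p1 p2, [/\ P1 p1, P2 p2 & p = PMul p1 p2]) => M; split.
  case=> [/H1 [UM Z]|/H2 [UM Z]]; split => // _ [p1 [p2 [Q1 Q2 ->]]] /=.
    by rewrite Z // mul0r.
  by rewrite (Z p2) // mulr0.
move=> [UM Z]; have [Z1|] := classic (forall p1, P1 p1 -> peval p1 M = 0).
  by left; apply/H1.
move=> /not_all_ex_not [p1 np1]; have [Q1 nz1] := imply_to_and _ _ np1.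
right; apply/H2; split => // p2 Q2.
have /eqP := Z (PMul p1 p2) (ex_intro _ p1 (ex_intro _ p2 (And3 Q1 Q2 erefl))).
by rewrite /= mulf_eq0 => /orP [/eqP|/eqP].
Qed.

Lemma zclosed_bigcup (T : eqType) (S : T -> 'M[C]_n -> Prop) (s : seq T) :
  (forall x, x \in s -> zclosed (S x)) ->
  zclosed (fun M => exists2 x, x \in s & S x M).
Proof.
elim: s => [|a s IH] Scl.
  by apply: zclosed_ext zclosed0 => M; split => // [[]].
apply: (@zclosed_ext (fun M => S a M \/ exists2 x, x \in s & S x M)).
  move=> M; split=> [[Sa|[x xs Sx]]|[x]]; first by exists a; rewrite ?mem_head.
    by exists x; rewrite // in_cons xs orbT.
  by rewrite in_cons => /orP [/eqP ->|xs Sx]; [left|right; exists x].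
apply: zclosedU; first by apply: Scl; rewrite mem_head.
by apply: IH => x xs; apply: Scl; rewrite in_cons xs orbT.
Qed.

Lemma zirreducible_cover (G : 'M[C]_n -> Prop) (T : eqType)
    (S : T -> 'M[C]_n -> Prop) (s : seq T) :
  zirreducible G -> (forall x, x \in s -> zclosed (S x)) ->
  (forall g, G g -> exists2 x, x \in s & S x g) ->
  exists2 x, x \in s & forall g, G g -> S x g.
Proof.
move=> [[g0 Gg0] Girr]; elim: s => [|a s IH] Scl cover.
  by have [] := cover _ Gg0.
have Scl' x : x \in s -> zclosed (S x).
  by move=> xs; apply: Scl; rewrite in_cons xs orbT.
have cover' g : G g -> S a g \/ exists2 x, x \in s & S x g.
  move=> /cover [x]; rewrite in_cons => /orP [/eqP ->|xs Sx]; first by left.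
  by right; exists x.
have [Ga|Gs] := Girr _ _ (Scl _ (mem_head _ _)) (zclosed_bigcup Scl') cover'.
  by exists a; rewrite ?mem_head.
by have [x xs Sx] := IH Scl' Gs; exists x; rewrite // in_cons xs orbT.
Qed.

Definition psum (s : seq (pexpr C n)) := foldr (@PAdd C n) (PConst n 0) s.

Lemma peval_psum s M : peval (psum s) M = \sum_(q <- s) peval q M.
Proof. by elim: s => [|a s IH]; rewrite ?big_nil ?big_cons //= IH. Qed.

(* Membership of [Y *m rho h^T] in [U] is the vanishing of [Y *m rho h^T *m cokermx U],
   whose entries are linear in the entries of [rho h], hence regular on [G]. *)
Lemma zclosed_rep_submx r (G : 'M[C]_n -> Prop) (rho : 'M[C]_n -> 'M[C]_r)
    p m (Y : 'M[C]_(p, r)) (U : 'M[C]_(m, r)) :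
  zclosed G -> rational_rep G rho ->
  zclosed (fun h => G h /\ (Y *m (rho h)^T <= U)%MS).
Proof.
move=> [PG HG] [[k [q rhoE]] _ _].
pose E (K : 'M_r) a j := psum [seq psum [seq PMul (PConst n (Y a l * K i j)) (q i l)
                                 | l <- index_enum 'I_r] | i <- index_enum 'I_r].
have YK (K : 'M_r) h : G h -> forall a j,
    (Y *m (rho h)^T *m K) a j = peval (E K a j) h / (\det h) ^+ k.
  move=> Gh a j; rewrite rhoE // peval_psum big_map mulr_suml !mxE.
  apply: eq_bigr => i _; rewrite peval_psum big_map !mxE !mulr_suml.
  by apply: eq_bigr => l _; rewrite !mxE /=; ring.
exists (fun e => PG e \/ exists a j, e = E (cokermx U) a j) => M; split.
  move=> [GM YM]; have [UM PGM] := (HG M).1 GM; split => // e [/PGM //|[a [j ->]]].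
  have detM : (\det M) ^+ k != 0 by rewrite expf_neq0 // -unitfE -unitmxE.
  move: YM; rewrite submxE => /eqP/matrixP/(_ a j); rewrite YK // mxE.
  by move/eqP; rewrite mulf_eq0 invr_eq0 (negPf detM) orbF => /eqP.
move=> [UM Z]; have GM : G M by apply/HG; split => // e PGe; apply: Z; left.
split => //; rewrite submxE; apply/eqP/matrixP => a j.
by rewrite YK // Z ?mul0r ?mxE //; right; exists a, j.
Qed.

End Zariski.

Section Subspaces.
Variables (F : fieldType) (r : nat).

Lemma addsmx_closed_maximum (Q : 'M[F]_r -> Prop) (V0 : 'M[F]_r) :
  Q V0 -> (forall V W, Q V -> Q W -> Q (V + W)%MS) ->
  exists2 V, Q V /\ (V0 <= V)%MS & forall W, Q W -> (W <= V)%MS.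
Proof.
move=> QV0 QD.
suff ind d V : (r - \rank V <= d)%N -> Q V -> (V0 <= V)%MS ->
    exists2 V, Q V /\ (V0 <= V)%MS & forall W, Q W -> (W <= V)%MS.
  by apply: (ind r V0); rewrite ?leq_subr.
elim: d V => [|d IH] V rV QV V0V.
  exists V => // W _; apply: submx_full.
  by rewrite /row_full eqn_leq rank_leq_col -subn_eq0 -leqn0.
have [maxV|] := classic (forall W, Q W -> (W <= V)%MS); first by exists V.
move=> /not_all_ex_not [W nWV]; have [QW /negP WV] := imply_to_and _ _ nWV.
apply: (IH (V + W)%MS); [|exact: QD|exact: submx_trans V0V (addsmxSl _ _)].
have : (\rank V < \rank (V + W))%N.
  by rewrite (ltn_leqif (mxrank_leqif_sup (addsmxSl V W))) addsmx_sub submx_refl.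
by move: rV; lia.
Qed.

End Subspaces.

Notation intC := (fun z : int => z%:~R).

Section IntegerRows.
Variables (C : numFieldType) (r : nat).

Lemma row_free_int_indep k (M : 'M[int]_(k, r)) :
  row_free (map_mx intC M : 'M[C]_(k, r)) ->
  forall c : 'I_k -> int, \sum_(i < k) c i *: row i M = 0 -> forall i, c i = 0.
Proof.
move=> freeM c sum0; have cM0 : (\row_i c i) *m M = 0.
  by rewrite mulmx_sum_row; under eq_bigr => i _ do rewrite mxE.
have : map_mx intC (\row_i c i) *m map_mx intC M = 0 *m (map_mx intC M : 'M[C]_(k, r)).
  by rewrite -map_mxM cM0 mul0mx map_mx0.
move/(row_free_inj freeM)/rowP => c0 i; have := c0 i; rewrite !mxE => /eqP.
by rewrite intr_eq0 => /eqP.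
Qed.

Lemma rank_int_rows_lt (B : 'rV[int]_r -> Prop) k (M : 'M[int]_(k, r)) :
  rank_lt B r -> (forall i, B (row i M)) ->
  (\rank (map_mx intC M : 'M[C]_(k, r)) < r)%N.
Proof.
move=> Brank BM; pose N := rowsub (maxrankfun (map_mx intC M : 'M[C]_(k, r))) M.
apply: Brank; exists (fun i => row i N); split; first by move=> i; rewrite row_rowsub.
by apply: row_free_int_indep; rewrite map_mxsub; exact: maxrowsub_free.
Qed.

(* The span of [B] is the largest subspace spanned by finitely many elements of [B]. *)
Lemma rank_lt_span (B : 'rV[int]_r -> Prop) : rank_lt B r ->
  exists2 U : 'M[C]_r, (\rank U < r)%N & forall b, B b -> (toC C b <= U)%MS.
Proof.
move=> Brank.
pose Q (W : 'M[C]_r) := exists k (M : 'M[int]_(k, r)),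
  (forall i, B (row i M)) /\ (W :=: map_mx intC M)%MS.
have Q0 : Q 0 by exists 0%N, 0; split=> [[]//|]; apply/eqmxP; rewrite map_mx0 !sub0mx.
have QD V W : Q V -> Q W -> Q (V + W)%MS.
  move=> [k [M [BM eV]]] [l [N [BN eW]]]; exists (k + l)%N, (col_mx M N); split.
    by move=> i; case: (split_ordP i) => j ->; rewrite ?rowKu ?rowKd.
  by apply: eqmx_trans (adds_eqmx eV eW) _; rewrite map_col_mx; exact: addsmxE.
have [U [[k [M [BM eU]]] _] maxU] := addsmx_closed_maximum Q0 QD.
exists U; first by rewrite eU; exact: rank_int_rows_lt BM.
move=> b Bb; rewrite -(genmxE (toC C b)); apply: maxU.
by exists 1%N, b; split; [move=> i; rewrite row_id | exact: genmxE].
Qed.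

End IntegerRows.

Section InvariantSubspace.
Variables (F : fieldType) (n r : nat) (G : 'M[F]_n -> Prop) (rho : 'M[F]_n -> 'M[F]_r).
Hypotheses (G1 : G 1%:M) (GM : forall g h, G g -> G h -> G (g *m h)).
Hypotheses (rho1 : rho 1%:M = 1%:M)
  (rhoM : forall g h, G g -> G h -> rho (g *m h) = rho g *m rho h).

(* The invariant subspace is the largest [V] with [rho h V <= U] for all [h] in [G]. *)
Lemma invariant_subspace_between m (U : 'M[F]_(m, r)) p (Y : 'M[F]_(p, r)) :
  (forall h, G h -> (Y *m (rho h)^T <= U)%MS) ->
  exists2 V : 'M[F]_r,
    (forall g, G g -> (V *m (rho g)^T <= V)%MS) & (Y <= V)%MS /\ (V <= U)%MS.
Proof.
move=> YU; pose Q (V : 'M[F]_r) := forall h, G h -> (V *m (rho h)^T <= U)%MS.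
have QY : Q <<Y>>%MS by move=> h Gh; rewrite (eqmxMr _ (genmxE Y)) YU.
have QD V W : Q V -> Q W -> Q (V + W)%MS.
  by move=> QV QW h Gh; rewrite addsmxMr addsmx_sub QV ?QW.
have [V [QV YV] maxV] := addsmx_closed_maximum QY QD.
exists V => [g Gg|]; last first.
  by split; [rewrite -(genmxE Y) | have := QV _ G1; rewrite rho1 trmx1 mulmx1].
by apply: maxV => h Gh; rewrite -mulmxA -trmx_mul -rhoM //; apply/QV/GM.
Qed.

End InvariantSubspace.

Lemma unitmx_idem_eq1 (R : comUnitRingType) n (A : 'M[R]_n) :
  A \in unitmx -> A *m A = A -> A = 1%:M.
Proof. by move=> Au AA; rewrite -(mulmxV Au) -{2}AA mulmxK. Qed.

Lemma toC_actv (C : fieldType) r (M : 'M[int]_r) (a : 'rV[int]_r) :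
  toC C (actv M a) = toC C a *m (map_mx intC M)^T.
Proof. by rewrite /toC /actv map_mxM map_trmx. Qed.

Theorem proposition4p1 (R : realType) (n r : nat)
  (G D : 'M[R[i]]_n -> Prop) (phi : 'M[R[i]]_n -> 'M[int]_r)
  (rho : 'M[R[i]]_n -> 'M[R[i]]_r) :
  linear_algebraic_group G -> zirreducible G ->
  is_group D -> zdense D G ->
  (forall d, D d -> phi d \in unitmx) ->
  (forall d e, D d -> D e -> phi (d *m e) = phi d *m phi e) ->
  rational_rep G rho ->
  (forall d, D d -> rho d = map_mx (fun z : int => z%:~R) (phi d)) ->
  subgroup_displacement D phi (frakX G rho).
Proof.
move=> [[G1 _ GM _] Gcl] Girr [D1 DU _ DV] [DG Ddense] phiU phiM rhoG rho_phi.
move=> B _ Brank X XfrakX; have [_ rhoU rhoM] := rhoG.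
have rho1 : rho 1%:M = 1%:M by apply: unitmx_idem_eq1; rewrite -?rhoM ?mulmx1 ?rhoU.
have phi1 : phi 1%:M = 1%:M by apply: unitmx_idem_eq1; rewrite -?phiM ?mulmx1 ?phiU.
have [U rankU BU] := rank_lt_span (R[i]) Brank.
apply: NNPP => no_displacement.
pose S x h := G h /\ (toC (R[i]) x *m (rho h)^T <= U)%MS.
have S_closed x : x \in X -> zclosed (S x) by move=> _; exact: zclosed_rep_submx.
have coverD h : D h -> exists2 x, x \in X & S x h.
  move=> Dh; have Dh' := DV _ Dh; apply: NNPP => noS; apply: no_displacement.
  exists (invmx h); split=> // b Bb.
  apply/negP => bX; apply: noS; exists (actv (phi (invmx h)) b) => //.
  split; first exact: DG.
  rewrite toC_actv rho_phi // -mulmxA -trmx_mul -map_mxM -phiM //.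
  by rewrite mulmxV ?DU // phi1 map_mx1 trmx1 mulmx1 BU.
have coverG : forall h, G h -> exists2 x, x \in X & S x h.
  exact: Ddense (zclosed_bigcup S_closed) coverD.
have [x xX Sx] := zirreducible_cover Girr S_closed coverG.
have [V Vinv [xV VU]] := invariant_subspace_between G1 GM rho1 rhoM (fun h Gh => (Sx h Gh).2).
have [_ /(_ V Vinv)] := XfrakX x xX; apply=> //.
exact: leq_ltn_trans (mxrankS VU) rankU.
Qed.
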